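(* Let $A$ be an involutive alphabet, let $\Gamma$ be an involutive $A$-tree and let $u,v$ be nodes of $\Gamma$. Then $\Gamma$ with root $u$ is regular if and only if $\Gamma$ with root $v$ is regular.
   Context: An $A$-graph is a pair $(V,E)$ with $E\subseteq V\times A\times V$; it is involutive if $(u,a,v)\in E\iff(v,a^{-1},u)\in E$. A path is reduced if it contains no edge immediately followed by its inverse edge. A rooted involutive graph is a tree if every vertex is the end of a unique reduced path from the root. A multi-edge NFA (mNFA) is $\mathcal{A}=(Q,A,T,\alpha,\lambda,\omega)$ with finite state set $Q$, finite alphabet $A$, finite transition set $T$, and maps $\alpha,\omega\colon T\to Q$ (start, end) and $\lambda\colon T\to A$ (label); parallel transitions with equal label are allowed. A run is a sequence of transitions $\tau_1\cdots\tau_\ell$ with $\omega(\tau_i)=\alpha(\tau_{i+1})$. For a state $p$, $\Gamma(p)$ is the graph whose nodes are runs starting at $p$ (root: the empty run), with an edge $\varrho\to\varrho\tau$ labeled $\lambda(\tau)$, closed under adding inverse edges (passing to $A^{\pm1}$ if $A$ is not involutive); node $\varrho$ is labeled by the state where it ends. A rooted node-labeled involutive $A$-tree is regular if it is isomorphic (as a rooted node-labeled $A$-graph, i.e. via a root-preserving label-preserving graph isomorphism together with a bijection between the sets of node labels compatible with the labelings) to $\Gamma(p)$ for some state $p$ of an mNFA with alphabet $A$; a rooted involutive $A$-tree is regular if it is regular for some node labeling. *)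

From mathcomp Require Import all_boot.
Set Implicit Arguments. Unset Strict Implicit. Unset Printing Implicit Defensive.

Section Graphs.
Variables (A : finType) (inv : A -> A).

Definition involutive_graph (V : Type) (E : V -> A -> V -> Prop) : Prop :=
  forall u a v, E u a v <-> E v (inv a) u.

(* A path starting at x is encoded by the list [(a1,v1);...;(an,vn)] of its
   edges (x,a1,v1),(v1,a2,v2),... *)
Fixpoint is_path (V : Type) (E : V -> A -> V -> Prop) (x : V)
    (p : seq (A * V)) : Prop :=
  match p with
  | [::] => True
  | (a, y) :: q => E x a y /\ is_path E y q
  end.

Fixpoint reduced (V : Type) (x : V) (p : seq (A * V)) : Prop :=
  match p with
  | (a, y) :: ((b, z) :: _) as q => ~ (b = inv a /\ z = x) /\ reduced y q
  | _ => True
  end.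

Definition path_end (V : Type) (x : V) (p : seq (A * V)) : V :=
  last x (map snd p).

Definition is_tree (V : Type) (E : V -> A -> V -> Prop) (r : V) : Prop :=
  forall v : V, exists! p : seq (A * V),
    is_path E r p /\ reduced r p /\ path_end r p = v.

End Graphs.

Record mNFA (A : finType) := MNFA {
  state : finType;
  trans : finType;
  alpha : trans -> state;   (* start *)
  omega : trans -> state;   (* end *)
  lambda : trans -> A
}.

Section RunTree.
Variables (A : finType) (inv : A -> A) (M : mNFA A).

Fixpoint is_run (q : state M) (s : seq (trans M)) : bool :=
  match s with
  | [::] => true
  | t :: s' => (alpha t == q) && is_run (omega t) s'
  end.

(* Nodes of Gamma(p): runs starting at p. *)
Definition run_node (p : state M) : Type := {s : seq (trans M) | is_run p s}.

Definition run_root (p : state M) : run_node p :=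
  exist (fun s => is_run p s) [::] (erefl true).

(* node label: the state where the run ends *)
Definition run_end (p : state M) (x : run_node p) : state M :=
  last p (map (@omega A M) (sval x)).

Definition run_edge (p : state M) (x : run_node p) (a : A) (y : run_node p)
    : Prop :=
  (exists t, sval y = rcons (sval x) t /\ lambda t = a) \/
  (exists t, sval x = rcons (sval y) t /\ a = inv (lambda t)).

End RunTree.

Definition regular_labeled (A : finType) (inv : A -> A) (V : Type)
    (E : V -> A -> V -> Prop) (r : V) (L : Type) (l : V -> L) : Prop :=
  exists (M : mNFA A) (p : state M) (phi : V -> run_node p),
    bijective phi /\ phi r = run_root p /\
    (forall x a y, E x a y <-> run_edge inv (phi x) a (phi y)) /\
    exists beta : L -> state M,
      (forall x, beta (l x) = run_end (phi x)) /\
      (forall x y, beta (l x) = beta (l y) -> l x = l y).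

Definition regular_tree (A : finType) (inv : A -> A) (V : Type)
    (E : V -> A -> V -> Prop) (r : V) : Prop :=
  exists (L : Type) (l : V -> L), regular_labeled inv E r l.

From mathcomp Require Import all_boot.
Set Implicit Arguments. Unset Strict Implicit. Unset Printing Implicit Defensive.

(* Regularity moves along a single edge: if [Gamma] rooted at [x] is the run
   tree [Gamma(p)] and [x -a-> y], then [y] is a one-step run [tau] from [p].
   Adding to the automaton a copy of [omega tau] as new initial state, a copy
   of [p] without its transition [tau], and a transition from the former to
   the latter labelled [inv (lambda tau)] yields an automaton whose run tree is
   [Gamma(p)] rerooted at [tau]. As every node of a tree is joined to the root
   by a path, regularity passes from [u] to [r] and from [r] to [v]. *)

Section RunEdges.
Variables (A : finType) (inv : A -> A).
Hypothesis invK : involutive inv.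

Definition seq_edge (M : mNFA A) (x : seq (trans M)) (a : A)
    (y : seq (trans M)) : Prop :=
  (exists t, y = rcons x t /\ lambda t = a) \/
  (exists t, x = rcons y t /\ a = inv (lambda t)).

Lemma seq_edge_sym (M : mNFA A) x a y :
  @seq_edge M x a y -> seq_edge y (inv a) x.
Proof.
case=> [[t [-> <-]]|[t [-> ->]]]; first by right; exists t.
by left; exists t; rewrite invK.
Qed.

Lemma run_edge_homo (M N : mNFA A) (p : state M) (q : state N)
    (f : run_node p -> run_node q) :
  (forall (x y : run_node p) t, sval y = rcons (sval x) t ->
     seq_edge (sval (f x)) (lambda t) (sval (f y))) ->
  forall x a y, run_edge inv x a y -> run_edge inv (f x) a (f y).
Proof.
move=> f_child x a y [[t [xy <-]]|[t [yx ->]]]; first exact: f_child xy.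
exact/seq_edge_sym/f_child.
Qed.

Lemma is_run_rcons_alpha (M : mNFA A) (q : state M) x t :
  is_run q (rcons x t) -> alpha t = last q (map (@omega A M) x).
Proof.
elim: x q => [|t0 x IHx] q /=; first by case/andP=> /eqP.
by case/andP=> _ /IHx.
Qed.

Lemma regular_tree_run_iso (V : Type) (E : V -> A -> V -> Prop) (y : V)
    (M N : mNFA A) (p : state M) (q : state N)
    (phi : V -> run_node p) (g : run_node p -> run_node q) :
  bijective phi -> (forall x a z, E x a z <-> run_edge inv (phi x) a (phi z)) ->
  bijective g ->
  (forall x a z, run_edge inv x a z <-> run_edge inv (g x) a (g z)) ->
  g (phi y) = run_root q -> regular_tree inv E y.
Proof.
move=> phi_bij phi_edge g_bij g_edge gphi_y.
exists (state N), (fun z => run_end (g (phi z))), N, q, (g \o phi).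
split; first exact: bij_comp.
split=> //; split; last by exists id.
by move=> x a z; apply: iff_trans (phi_edge x a z) (g_edge _ _ _).
Qed.

End RunEdges.

Section Reroot.
Variables (A : finType) (inv : A -> A).
Hypothesis invK : involutive inv.
Variables (M : mNFA A) (p : state M) (tau : trans M).
Hypothesis alpha_tau : alpha tau = p.
Let q := omega tau.

(* States: [inl s] is the old state [s]; [new_root] is a copy of [q] and
   [old_root] a copy of [p]; [sink] is the (unreachable) start of the copies
   that do not leave from the right state. Transitions: [inl (None, t)] is the
   old [t], [inl (Some true, t)] a copy of [t] leaving [new_root],
   [inl (Some false, t)] a copy of [t] leaving [old_root], and [back] is
   [tau] reversed. *)
Definition reroot_state : finType := (state M + option bool)%type.
Definition reroot_trans : finType := ((option bool * trans M) + unit)%type.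

Definition new_root : reroot_state := inr (Some true).
Definition old_root : reroot_state := inr (Some false).
Definition sink : reroot_state := inr None.

Definition old_trans (t : trans M) : reroot_trans := inl (None, t).
Definition back : reroot_trans := inr tt.

Definition reroot_alpha (t : reroot_trans) : reroot_state :=
  match t with
  | inl (None, t) => inl (alpha t)
  | inl (Some true, t) => if alpha t == q then new_root else sink
  | inl (Some false, t) =>
      if (alpha t == p) && (t != tau) then old_root else sink
  | inr _ => new_root
  end.

Definition reroot_omega (t : reroot_trans) : reroot_state :=
  if t is inl (_, t) then inl (omega t) else old_root.

Definition reroot_lambda (t : reroot_trans) : A :=
  if t is inl (_, t) then lambda t else inv (lambda tau).

Definition reroot : mNFA A :=
  @MNFA A reroot_state reroot_trans reroot_alpha reroot_omega reroot_lambda.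

Definition forget_copy (t : reroot_trans) : trans M :=
  if t is inl (_, t) then t else tau.

Definition reroot_run (s : seq (trans M)) : seq (trans reroot) :=
  match s with
  | [::] => [:: back]
  | t :: s' =>
      if t == tau then
        if s' is t1 :: s1 then inl (Some true, t1) :: map old_trans s1 else [::]
      else back :: inl (Some false, t) :: map old_trans s'
  end.

Definition unreroot_run (w : seq (trans reroot)) : seq (trans M) :=
  match w with
  | [::] => [:: tau]
  | inr _ :: w' => map forget_copy w'
  | inl (_, t) :: w' => tau :: t :: map forget_copy w'
  end.

Lemma is_run_old_trans s w :
  @is_run A reroot (inl s) (map old_trans w) = is_run s w.
Proof. by elim: w s => [//|t w IHw] s /=; rewrite IHw. Qed.

Lemma is_run_old s w : @is_run A reroot (inl s) w ->
  w = map old_trans (map forget_copy w) /\ is_run s (map forget_copy w).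
Proof.
elim: w s => [//|[[[[]|] t]|[]] w IHw] s //=.
- by case: ifP.
- by case: ifP.
- by case/andP=> /eqP[<-] /IHw[w_eq ->]; rewrite -w_eq eqxx.
Qed.

Lemma reroot_runK : cancel reroot_run unreroot_run.
Proof.
case=> [//|t s] /=.
by case: ifP => [/eqP ->|_]; case: s => [|t1 s1] //=; rewrite -map_comp map_id.
Qed.

Lemma is_run_reroot s : is_run p s -> @is_run A reroot new_root (reroot_run s).
Proof.
case: s => [//|t s] /= /andP[/eqP alpha_t s_run].
case: ifP => [/eqP tau_t|/negbT tau_t] /=.
  case: s s_run => [//|t1 s1] /= /andP[/eqP alpha_t1 s1_run].
  by rewrite /q -tau_t alpha_t1 eqxx /= is_run_old_trans.
by rewrite alpha_t eqxx tau_t /= is_run_old_trans.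
Qed.

Lemma is_run_unreroot w :
  @is_run A reroot new_root w -> is_run p (unreroot_run w).
Proof.
case: w => [|[[[[]|] t]|[]] w] /=; rewrite ?alpha_tau ?eqxx //.
- by case: ifP => // _ /andP[_ /is_run_old[_ ->]].
- by case: ifP.
- case: w => [//|[[[[]|] t]|[]] w] //=; first by case: ifP.
  by case: ifP => // /andP[/eqP -> _] /is_run_old[_ ->]; rewrite eqxx.
Qed.

Lemma unreroot_runK w :
  @is_run A reroot new_root w -> reroot_run (unreroot_run w) = w.
Proof.
case: w => [|[[[[]|] t]|[]] w] /=; rewrite ?eqxx //.
- by case: ifP => // _ /andP[_ /is_run_old[<- _]].
- by case: ifP.
- case: w => [//|[[[[]|] t]|[]] w] //=; first by case: ifP.
  by case: ifP => // /andP[_ /negbTE ->] /is_run_old[<- _].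
Qed.

Lemma reroot_run_edge s t :
  seq_edge inv (reroot_run s) (lambda t) (reroot_run (rcons s t)).
Proof.
case: s => [|t0 s] /=.
  case: ifP => [/eqP ->|_]; last by left; exists (inl (Some false, t)).
  by right; exists back; rewrite /= invK.
left; case: ifP => _; last by exists (old_trans t); rewrite map_rcons.
case: s => [|t1 s] /=; first by exists (inl (Some true, t)).
by exists (old_trans t); rewrite map_rcons.
Qed.

(* [back] cannot end a run of length at least two, since no transition of
   [reroot] ends in [new_root]. *)
Lemma unreroot_run_edge w t : @is_run A reroot new_root (rcons w t) ->
  seq_edge inv (unreroot_run w) (reroot_lambda t) (unreroot_run (rcons w t)).
Proof.
case: w => [|t0 w] wt_run /=.
  by case: t {wt_run} => [[b t]|[]]; [left; exists t | right; exists tau].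
have lambda_t : reroot_lambda t = lambda (forget_copy t).
  case: t wt_run => [[b t] _ //|[] /is_run_rcons_alpha /=].
  by rewrite last_map; case: (last t0 w) => [[]|].
rewrite lambda_t; left; exists (forget_copy t).
by case: t0 {wt_run} => [[b t0]|[]]; case: w => [|t1 w] //=; rewrite map_rcons.
Qed.

Definition reroot_node (x : run_node p) : @run_node A reroot new_root :=
  exist _ (reroot_run (sval x)) (is_run_reroot (svalP x)).

Definition unreroot_node (w : @run_node A reroot new_root) : run_node p :=
  exist _ (unreroot_run (sval w)) (is_run_unreroot (svalP w)).

Lemma reroot_nodeK : cancel reroot_node unreroot_node.
Proof. by move=> x; apply: val_inj; rewrite /= reroot_runK. Qed.

Lemma unreroot_nodeK : cancel unreroot_node reroot_node.
Proof. by move=> w; apply: val_inj; rewrite /= unreroot_runK ?(svalP w). Qed.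

Lemma reroot_node_bij : bijective reroot_node.
Proof. exact: Bijective reroot_nodeK unreroot_nodeK. Qed.

Lemma reroot_node_edge x a y :
  run_edge inv x a y <-> run_edge inv (reroot_node x) a (reroot_node y).
Proof.
split.
  by apply: run_edge_homo => // {}x {}y t /= ->; exact: reroot_run_edge.
rewrite -{2}[x]reroot_nodeK -{2}[y]reroot_nodeK.
apply: run_edge_homo => // {}x {}y t /= xy; rewrite xy.
by apply: unreroot_run_edge; rewrite -xy (svalP y).
Qed.

Lemma reroot_node_tau (x : run_node p) :
  sval x = [:: tau] -> reroot_node x = @run_root A reroot new_root.
Proof. by move=> x_tau; apply: val_inj; rewrite /= x_tau /= eqxx. Qed.

End Reroot.

Lemma regular_tree_edge (A : finType) (inv : A -> A) (invK : involutive inv)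
    (V : Type) (E : V -> A -> V -> Prop) x a y :
  E x a y -> regular_tree inv E x -> regular_tree inv E y.
Proof.
move=> Exy [_ [_ [M [p [phi [phi_bij [phi_x [phi_edge _]]]]]]]].
have := proj1 (phi_edge x a y) Exy; rewrite phi_x.
case=> [[tau [phi_y _]]|[t [root_t _]]]; last first.
  by have := congr1 size root_t; rewrite size_rcons.
have alpha_tau : alpha tau = p.
  by have := svalP (phi y); rewrite phi_y /= andbT => /eqP.
apply: (regular_tree_run_iso phi_bij phi_edge)
  (reroot_node_bij inv alpha_tau) _ _.
  exact: reroot_node_edge.
exact: reroot_node_tau.
Qed.

Lemma regular_tree_path (A : finType) (inv : A -> A) (invK : involutive inv)
    (V : Type) (E : V -> A -> V -> Prop) (E_inv : involutive_graph inv E)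
    (pth : seq (A * V)) (x : V) :
  is_path E x pth ->
  regular_tree inv E x <-> regular_tree inv E (path_end x pth).
Proof.
elim: pth x => [//|[a y] pth IHpth] x /= [Exy /IHpth y_end].
apply: iff_trans y_end; split; first exact: regular_tree_edge Exy.
exact/regular_tree_edge/(E_inv x a y).
Qed.

Theorem proposition3p2 (A : finType) (inv : A -> A) (Hinv : involutive inv)
    (V : Type) (E : V -> A -> V -> Prop) (r : V)
    (Hinvol : involutive_graph inv E) (Htree : is_tree inv E r)
    (u v : V) :
  regular_tree inv E u <-> regular_tree inv E v.
Proof.
have [pu [[pu_path [_ <-]] _]] := Htree u.
have [pv [[pv_path [_ <-]] _]] := Htree v.
apply: iff_trans (iff_sym (regular_tree_path Hinv Hinvol pu_path)) _.
exact: regular_tree_path.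
Qed.
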